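(* Let $G=(V,E)$ be a graph with nonnegative edge lengths, root $r$, and integer demands $d_v>0$ on a set $\mathcal{D}$ of demand nodes, with total demand $D$. Fix $\epsilon>0$, $\alpha>1$, $\beta\ge\frac{\alpha+1}{\alpha-1}$, $\gamma>1$, $\delta>1$. Let $L\subseteq\{0,\dots,K\}$ and the cores $C_i$ ($i\in L$) be produced by Procedure 1 below, and let $T$ be produced by Procedure 2 below. Then $T$ is a tree and spans all demand nodes. Procedure 1: let $K=\lceil\log_{1+\epsilon}D\rceil$, $M_i=(1+\epsilon)^i$, $A_i(x)=\min\{x,M_i\}$; (1) for each $i=0,\dots,K$ let $T_i$ be a routing tree returned by a deterministic $\lambda$-approximation algorithm for SSRoB with cost function $A_i$; (2) for $i=1,\dots,K$ increasing, if $A_i(T_{i-1})<A_i(T_i)$ set $T_i\leftarrow T_{i-1}$; (3) for $i=K-1,\dots,0$ decreasing, if $A_i(T_{i+1})<A_i(T_i)$ set $T_i\leftarrow T_{i+1}$; (4) compute $C_i,B_i,R_i$ for each resulting $T_i$; (5) $L_B=\emptyset$, $B=\infty$; for $i=0,\dots,K$ increasing, if $B_i<B/\gamma$ add $i$ to $L_B$ and set $B\leftarrow B_i$; (6) $L=\emptyset$, $R=\infty$; for $i\in L_B$ decreasing, if $R_i<R/\delta$ add $i$ to $L$ and set $R\leftarrow R_i$. Procedure 2: set $T=\{r\}$; for each $i\in L$ in decreasing order, let $T'$ be an $(\alpha,\beta)$-LAST of the graph $(G/T)[C_i]$ rooted at the vertex obtained by contracting $T$, and set $T\leftarrow T\cup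 T'$.
   Context: A routing tree is a tree in $G$ containing $r$ and all demand nodes; each demand node $v$ sends $d_v$ units of flow to $r$ along its unique tree path, and $x_e$ is the total flow on edge $e$; $f(T)=\sum_{e\in T}l_ef(x_e)$. SSRoB with parameter $M$: find a routing tree minimizing $A(T)$ for $A(x)=\min\{x,M\}$; a $\lambda$-approximation returns a tree of cost at most $\lambda$ times optimal. For a routing tree $T_i$: rent cost $R_i=\sum_{e\in T_i,\,x_e<M_i} l_e A_i(x_e)$, normalized buy cost $B_i=\sum_{e\in T_i,\,x_e\ge M_i} l_e$, and the core $C_i$ consists of $r$ together with all vertices incident to edges $e\in T_i$ with $x_e\ge M_i$. $G/T$ denotes $G$ with the vertices of $T$ contracted to a single vertex, and $(G/T)[C_i]$ is its induced subgraph on $C_i$ (together with the contracted vertex); edges of $T'$ are identified with the corresponding edges of $G$. For $\alpha,\beta\ge1$, an $(\alpha,\beta)$-light approximate shortest-path tree ($(\alpha,\beta)$-LAST) of a graph $H$ with root $\rho$ is a spanning tree of $H$ in which every vertex's tree distance to $\rho$ is at most $\alpha$ times its shortest-path distance to $\rho$ in $H$, and whose total edge length is at most $\beta$ times the weight of a minimum spanning tree of $H$; such trees exist (and are efficiently computable) whenever $\alpha>1$ and $\beta\ge\frac{\alpha+1}{\alpha-1}$. *)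

From HB Require Import structures.
From mathcomp Require Import all_boot all_order all_algebra.
From mathcomp Require Import all_classical all_reals all_analysis.
Set Implicit Arguments. Unset Strict Implicit. Unset Printing Implicit Defensive.
Import Order.TTheory GRing.Theory Num.Theory.
Local Open Scope ring_scope.

(* Finite (multi)graphs: vertex type V, edge type E, each edge e has   *)
(* endpoints src e, tgt e (undirected).  Subgraphs are edge sets.       *)
Section GraphDefs.
Variables (V E : finType) (src tgt : E -> V).

Definition adj (F : {set E}) : rel V := fun x y =>
  [exists e in F, ((src e == x) && (tgt e == y)) || ((src e == y) && (tgt e == x))].

Definition conn (F : {set E}) (x y : V) : bool := connect (adj F) x y.

Definition verts (F : {set E}) (r : V) : {set V} :=
  r |: [set v | [exists e in F, (src e == v) || (tgt e == v)]].

(* (verts F r, F) is a tree: connected, and acyclic (every edge is a bridge;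
   in particular no loops) *)
Definition is_tree (F : {set E}) (r : V) : Prop :=
  (forall v, v \in verts F r -> conn F v r) /\
  (forall e, e \in F -> ~~ conn (F :\ e) (src e) (tgt e)).

Fixpoint is_walk (F : {set E}) (x : V) (p : seq E) (y : V) : bool :=
  match p with
  | [::] => x == y
  | e :: p' => (e \in F) &&
      (((src e == x) && is_walk F (tgt e) p' y) ||
       ((tgt e == x) && is_walk F (src e) p' y))
  end.

Variables (R : realType) (l : E -> R).

Definition walk_len (p : seq E) : R := \sum_(e <- p) l e.
Definition set_len (F : {set E}) : R := \sum_(e in F) l e.

(* length of the unique path from v to rho in the tree S:
   edge e lies on that path iff removing e separates v from rho *)
Definition tree_dist (S : {set E}) (rho v : V) : R :=
  \sum_(e in S | ~~ conn (S :\ e) v rho) l e.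

Definition spanning_tree (W : {set V}) (F : {set E}) (rho : V) (S : {set E}) : Prop :=
  S \subset F /\ is_tree S rho /\ verts S rho = W.

(* (alpha,beta)-LAST of H = (W, F) rooted at rho: every vertex's tree
   distance is at most alpha times its shortest-path distance in H
   (i.e. at most alpha times the length of every walk in H from rho to it),
   and total length at most beta times the weight of an MST of H
   (i.e. at most beta times the weight of every spanning tree of H). *)
Definition is_LAST (W : {set V}) (F : {set E}) (rho : V) (alpha beta : R)
    (S : {set E}) : Prop :=
  [/\ spanning_tree W F rho S,
      (forall v p, v \in W -> is_walk F rho p v ->
          tree_dist S rho v <= alpha * walk_len p) &
      (forall S', spanning_tree W F rho S' -> set_len S <= beta * set_len S')].

End GraphDefs.

Section Routing.
Variables (V E : finType) (src tgt : E -> V) (R : realType) (l : E -> R)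
  (r : V) (Dset : {set V}) (d : V -> nat).

Definition routing_tree (T : {set E}) : Prop :=
  is_tree src tgt T r /\ Dset \subset verts src tgt T r.

(* total flow on e: demands whose tree path to r uses e *)
Definition flow (T : {set E}) (e : E) : nat :=
  (\sum_(v in Dset | ~~ conn src tgt (T :\ e) v r) d v)%N.

Definition Acost (M x : R) : R := Num.min x M.

Definition cost (M : R) (T : {set E}) : R :=
  \sum_(e in T) l e * Acost M (flow T e)%:R.

Definition totD : nat := (\sum_(v in Dset) d v)%N.

Variables (eps gamma delta alpha beta : R).

Definition Kof : nat := `|Num.ceil (ln (totD%:R : R) / ln (1 + eps))|%N.

Definition Mi (i : nat) : R := (1 + eps) ^+ i.

Fixpoint step2 (T0 : nat -> {set E}) (i : nat) : {set E} :=
  match i with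
  | 0 => T0 0%N
  | j.+1 => if cost (Mi j.+1) (step2 T0 j) < cost (Mi j.+1) (T0 j.+1)
            then step2 T0 j else T0 j.+1
  end.

(* step (3): i = K-1..0 decreasing; step3aux K T2 n is the tree of index K - n *)
Fixpoint step3aux (K : nat) (T2 : nat -> {set E}) (n : nat) : {set E} :=
  match n with
  | 0 => T2 K
  | n'.+1 => let i := (K - n)%N in
      if cost (Mi i) (step3aux K T2 n') < cost (Mi i) (T2 i)
      then step3aux K T2 n' else T2 i
  end.

Definition Tfin (T0 : nat -> {set E}) (i : nat) : {set E} :=
  step3aux Kof (step2 T0) (Kof - i)%N.

Definition core (T : {set E}) (M : R) : {set V} :=
  r |: [set v | [exists e in T,
          (M <= (flow T e)%:R) && ((src e == v) || (tgt e == v))]].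
Definition Bcost (T : {set E}) (M : R) : R :=
  \sum_(e in T | M <= (flow T e)%:R) l e.
Definition Rcost (T : {set E}) (M : R) : R :=
  \sum_(e in T | (flow T e)%:R < M) l e * Acost M (flow T e)%:R.

Definition Ci (T0 : nat -> {set E}) (i : nat) : {set V} := core (Tfin T0 i) (Mi i).

(* step (5): None encodes B = infinity *)
Definition LB (T0 : nat -> {set E}) : seq nat :=
  (foldl (fun (st : seq nat * option R) i =>
      let Bi := Bcost (Tfin T0 i) (Mi i) in
      if (if st.2 is Some B then Bi < B / gamma else true)
      then (rcons st.1 i, Some Bi) else st)
    ([::], None) (iota 0 Kof.+1)).1.

(* step (6): iterate over L_B in decreasing order; None encodes R = infinity *)
Definition Lset (T0 : nat -> {set E}) : seq nat :=
  (foldl (fun (st : seq nat * option R) i =>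
      let Ri := Rcost (Tfin T0 i) (Mi i) in
      if (if st.2 is Some Rb then Ri < Rb / delta else true)
      then (rcons st.1 i, Some Ri) else st)
    ([::], None) (rev (LB T0))).1.

(* Procedure 2.  The contraction G/T is encoded by the vertex map pi that
   sends every vertex of T to r (the contracted vertex) and fixes the others.
   (G/T)[C] has vertex set pi(C u V(T)), edges all edges of G with both
   endpoints in C u V(T), with endpoints pi o src, pi o tgt. *)
Definition contr (VT : {set V}) (v : V) : V := if v \in VT then r else v.

Definition HW (VT C : {set V}) : {set V} := [set contr VT v | v in C :|: VT].
Definition HF (VT C : {set V}) : {set E} :=
  [set e | (src e \in C :|: VT) && (tgt e \in C :|: VT)].

(* proc2 C Tcur Ls Tres : starting from the current tree Tcur and
   processing the indices Ls in order, some run of the procedure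
   (with any choice of LASTs) ends with Tres *)
Fixpoint proc2 (C : nat -> {set V}) (Tcur : {set E}) (Ls : seq nat)
    (Tres : {set E}) : Prop :=
  match Ls with
  | [::] => Tres = Tcur
  | i :: Ls' =>
      let VT := verts src tgt Tcur r in
      exists T' : {set E},
        is_LAST (fun e => contr VT (src e)) (fun e => contr VT (tgt e)) l
          (HW VT (C i)) (HF VT (C i)) r alpha beta T' /\
        proc2 C (Tcur :|: T') Ls' Tres
  end.

(* Procedure 2 started from T = {r} (no edges), L in decreasing order *)
Definition proc2_result (T0 : nat -> {set E}) (T : {set E}) : Prop :=
  proc2 (Ci T0) (finset.set0 : {set E}) (sort (fun a b : nat => (b <= a)%N) (Lset T0)) T.

End Routing.

(* Gluing a spanning tree T' of the contraction G/T onto a tree T creates no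
   cycle: a cycle through an edge of T' survives the contraction, and a cycle
   through an edge of T must use edges of T' and, peeling these off one at a
   time, yields a cycle of T' in G/T.  Hence every stage of Procedure 2 is a
   tree.

   It spans the demand nodes because 0 always belongs to L, and M_0 = 1 puts
   every demand node into the core C_0 (the first edge on its path to r carries
   its positive demand).  Index 0 is the first record of step (5), and every
   later record j has B_j < B_(j-1); with M = M_(j-1), step (3) gives
     M B_(j-1) <= A_(j-1)(T_(j-1)) <= A_(j-1)(T_j) <= M B_j + R_j,
   so R_j > 0.  As R_0 = 0, the index 0, scanned last in step (6), is a record. *)

From Pilot Require Import Defs.
From HB Require Import structures.
From mathcomp Require Import all_boot all_order all_algebra.
From mathcomp Require Import all_classical all_reals all_analysis.
(* Reimported so that [subsetP], [subsetUl], ... denote the finite-set lemmas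
   rather than their classical-set homonyms. *)
From mathcomp Require Import fintype finset lra zify.
Import Order.TTheory GRing.Theory Num.Theory.
Set Implicit Arguments. Unset Strict Implicit.

Section Connectivity.
Variables (V E : finType) (s t : E -> V).
Implicit Types (F G : {set E}) (e : E) (v x y : V).

Lemma adjP F x y :
  reflect (exists2 e, e \in F & (s e = x /\ t e = y) \/ (s e = y /\ t e = x))
          (adj s t F x y).
Proof.
apply: (iffP existsP) => [[e /andP [eF He]] | [e eF He]]; exists e => //.
  by case/orP: He => /andP [/eqP -> /eqP ->]; [left | right].
by rewrite eF; case: He => -[-> ->]; rewrite !eqxx ?orbT.
Qed.

Lemma adj_sym F : symmetric (adj s t F).
Proof.
move=> x y; apply/adjP/adjP => -[e eF He]; exists e => //;
  by case: He => H; [right | left].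
Qed.

Lemma conn_sym F x y : conn s t F x y = conn s t F y x.
Proof. exact: (sym_connect_sym (adj_sym F)). Qed.

Lemma conn_trans F x y z : conn s t F x y -> conn s t F y z -> conn s t F x z.
Proof. exact: connect_trans. Qed.

Lemma conn_edge F e : e \in F -> conn s t F (s e) (t e).
Proof. by move=> eF; apply/connect1/adjP; exists e => //; left. Qed.

Lemma conn_subset F G x y : F \subset G -> conn s t F x y -> conn s t G x y.
Proof.
move=> /subsetP sFG; apply: connect_sub => {}x {}y /adjP [e eF He].
by apply/connect1/adjP; exists e => //; apply: sFG.
Qed.

Lemma conn_setD1 F e x y : e \in F -> conn s t F x y ->
  [\/ conn s t (F :\ e) x y,
      conn s t (F :\ e) x (s e) /\ conn s t (F :\ e) (t e) y |
      conn s t (F :\ e) x (t e) /\ conn s t (F :\ e) (s e) y].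
Proof.
move=> eF /connectP [p]; elim: p x => [|z p IH] x /=.
  by move=> _ ->; apply: Or31; apply: connect0.
case/andP=> /adjP [f fF Hf] /IH {}IH /IH.
have [fe | fe] := eqVneq f e.
  subst f; case: Hf => -[<- <-] [H | [H1 H2] | [H1 H2]].
  - by apply: Or32; split; first apply: connect0.
  - by apply: Or31; rewrite conn_sym in H1; apply: conn_trans H1 H2.
  - by apply: Or31.
  - by apply: Or33; split; first apply: connect0.
  - by apply: Or31.
  - by apply: Or31; rewrite conn_sym in H1; apply: conn_trans H1 H2.
have Cxz : conn s t (F :\ e) x z.
  by apply/connect1/adjP; exists f; rewrite // !inE fe.
case=> [H | [H1 H2] | [H1 H2]].
- by apply: Or31; apply: conn_trans Cxz H.
- by apply: Or32; split=> //; apply: conn_trans Cxz H1.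
- by apply: Or33; split=> //; apply: conn_trans Cxz H1.
Qed.

Lemma path_setD1 F e v x q : (s e == v) || (t e == v) -> v \notin x :: q ->
  path (adj s t F) x q -> path (adj s t (F :\ e)) x q.
Proof.
move=> ev; elim: q x => [|z q IH] x //=; rewrite !inE !negb_or.
case/and3P=> vx vz vq /andP [/adjP [f fF Hf] Hq].
rewrite IH ?inE ?negb_or ?vz // andbT; apply/adjP; exists f => //.
rewrite !inE fF andbT; apply: contraNneq vx => fe; subst f.
by move: ev vz; case: Hf => -[-> ->] /orP [] /eqP ->; rewrite ?eqxx.
Qed.

Lemma exists_incident_bridge F v r :
  (forall e, e \in F -> ~~ conn s t (F :\ e) (s e) (t e)) ->
  conn s t F v r -> v != r ->
  exists2 e, e \in F & ((s e == v) || (t e == v)) && ~~ conn s t (F :\ e) v r.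
Proof.
move=> acyclic /connectP [p Hp ->]; case: (shortenP Hp) => {Hp}-[|z q] //=.
  by rewrite eqxx.
case/andP=> /adjP [e eF He] Hq /andP [vq _] _ _.
have ev : (s e == v) || (t e == v) by case: He => -[-> ->]; rewrite eqxx ?orbT.
exists e; rewrite // ev; apply: contra (acyclic e eF) => Cvr.
have Czr : conn s t (F :\ e) z (last z q).
  by apply/connectP; exists q; first exact: path_setD1 ev vq Hq.
have Cvz : conn s t (F :\ e) v z.
  by rewrite conn_sym in Czr; apply: conn_trans Cvr Czr.
by case: He => -[-> ->]; rewrite // conn_sym.
Qed.

End Connectivity.

Section Vertices.
Variables (V E : finType) (s t : E -> V) (r : V).
Implicit Types (F G : {set E}) (e : E).

Lemma verts_root F : r \in verts s t F r.
Proof. exact: setU11. Qed.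

Lemma verts_src F e : e \in F -> s e \in verts s t F r.
Proof.
by move=> eF; rewrite !inE; apply/orP; right; apply/existsP; exists e; rewrite eF eqxx.
Qed.

Lemma verts_tgt F e : e \in F -> t e \in verts s t F r.
Proof.
by move=> eF; rewrite !inE; apply/orP; right; apply/existsP; exists e; rewrite eF eqxx orbT.
Qed.

Lemma verts_subset F G : F \subset G -> verts s t F r \subset verts s t G r.
Proof.
move=> /subsetP sFG; apply/subsetP => v; rewrite !inE.
case/orP=> [-> // | /existsP [e /andP [eF ev]]]; apply/orP; right.
by apply/existsP; exists e; rewrite sFG.
Qed.

Lemma is_tree_set0 : is_tree s t set0 r.
Proof.
split=> [v | e]; last by rewrite inE.
by rewrite !inE => /orP [/eqP -> | /existsP [e]]; [apply: connect0 | rewrite inE].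
Qed.

End Vertices.

Section Contraction.
Variables (V E : finType) (s t : E -> V) (r : V) (T : {set E}).
Local Notation VT := (verts s t T r).
Local Notation pi := (contr r VT).
Local Notation conn_pi := (conn (fun e => pi (s e)) (fun e => pi (t e))).
Local Notation verts_pi := (verts (fun e => pi (s e)) (fun e => pi (t e))).

Lemma contr_root : pi r = r.
Proof. by rewrite /contr verts_root. Qed.

Lemma contr_eq_notin c x : c \notin VT -> pi x = c -> x = c.
Proof. by rewrite /contr => cT; case: ifP => // _ rc; rewrite -rc verts_root in cT. Qed.

Lemma verts_contr S c : c \notin VT -> c \in verts_pi S r -> c \in verts s t S r.
Proof.
move=> cT /setU1P [cr | ]; first by rewrite cr verts_root in cT.
rewrite inE => /existsP [e /andP [eS /orP [] /eqP /(contr_eq_notin cT) <-]].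
- exact: verts_src.
- exact: verts_tgt.
Qed.

Lemma conn_contr S x y : conn s t (T :|: S) x y -> conn_pi S (pi x) (pi y).
Proof.
move=> /connectP [p]; elim: p x => [|z p IH] x /=; first by move=> _ ->; apply: connect0.
case/andP=> /adjP [f] /setUP [fT Hf | fS Hf] /IH {}IH /IH; rewrite -/(conn _ _ _ _ _).
  suff -> : pi x = pi z by [].
  by rewrite /contr; case: Hf => -[<- <-]; rewrite (verts_src _ _ _ fT) (verts_tgt _ _ _ fT).
by apply: conn_trans; apply/connect1/adjP; exists f => //; case: Hf => -[<- <-]; [left | right].
Qed.

Lemma subset_verts_spanning_contr S C :
  verts_pi S r = HW r VT C -> C \subset verts s t (T :|: S) r.
Proof.
move=> spanS; apply/subsetP => c cC; have [cT | cT] := boolP (c \in VT).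
  by apply: (subsetP (verts_subset _ _ _ (subsetUl T S))).
have : pi c \in verts_pi S r by rewrite spanS; apply: imset_f; rewrite inE cC.
rewrite /contr (negbTE cT) => /(verts_contr cT).
by apply: (subsetP (verts_subset _ _ _ (subsetUr T S))).
Qed.

Hypothesis T_tree : is_tree s t T r.

Lemma conn_contr_eq x y : pi x = pi y -> conn s t T x y.
Proof.
have T_spans := T_tree.1; rewrite /contr.
case: ifP => xT; case: ifP => yT; last by move=> ->; apply: connect0.
- by move=> _; have := T_spans y yT; rewrite conn_sym; apply: conn_trans (T_spans x xT).
- by move=> ry; rewrite -ry verts_root in yT.
- by move=> xr; rewrite xr verts_root in xT.
Qed.

Lemma contr_conn S x y : conn_pi S (pi x) (pi y) -> conn s t (T :|: S) x y.
Proof.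
have TS : T \subset T :|: S by apply: subsetUl.
suff conn_fibres u w : conn_pi S u w -> forall a b, pi a = u -> pi b = w ->
    conn s t (T :|: S) a b by move=> C; apply: (conn_fibres _ _ C).
move=> /connectP [p]; elim: p u => [|z p IH] u /=.
  move=> _ -> a b au bw; apply: conn_subset TS _.
  by apply: conn_contr_eq; rewrite au bw.
case/andP=> /adjP [f fS Hf] /IH {}IH /IH conn_z a b au bw.
have fTS : f \in T :|: S by rewrite inE fS orbT.
have conn_T c : pi c = pi a -> conn s t (T :|: S) a c.
  by move=> ca; apply: conn_subset TS _; apply: conn_contr_eq.
case: Hf => -[fu fz].
- apply: conn_trans (conn_T (s f) _) _; first by rewrite fu au.
  by apply: conn_trans (conn_edge _ _ fTS) _; apply: conn_z.
- apply: conn_trans (conn_T (t f) _) _; first by rewrite fz au.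
  by apply: conn_trans _ (conn_z _ _ fu bw); rewrite conn_sym; apply: conn_edge.
Qed.

Variable T' : {set E}.
Hypothesis T'_tree : is_tree (fun e => pi (s e)) (fun e => pi (t e)) T' r.

Lemma union_spans v : v \in verts s t (T :|: T') r -> conn s t (T :|: T') v r.
Proof.
case/setU1P => [-> | ]; first exact: connect0.
rewrite inE => /existsP [e /andP [/setUP [eT | eT'] /orP ev]].
  apply: conn_subset (subsetUl T T') _; apply: T_tree.1.
  by case: ev => /eqP <-; [apply: verts_src | apply: verts_tgt].
apply: contr_conn; rewrite contr_root; apply: T'_tree.1.
case: ev => /eqP <-.
  exact: (verts_src (fun e => pi (s e))).
exact: (verts_tgt _ (fun e => pi (t e))).
Qed.

Lemma union_bridge_contr e : e \in T' -> ~~ conn s t ((T :|: T') :\ e) (s e) (t e).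
Proof.
move=> eT'; apply: contra (T'_tree.2 e eT') => C.
apply: conn_contr; apply: conn_subset C; apply/subsetP => x; rewrite !inE.
by case/andP=> -> /orP [] ->; rewrite ?orbT.
Qed.

Lemma union_bridge e : e \in T -> ~~ conn s t ((T :|: T') :\ e) (s e) (t e).
Proof.
move=> eT.
(* Add the edges of T' one at a time: a walk around e through a new edge f
   yields, after contracting T, a cycle through f in T'. *)
suff no_path (S : seq E) :
    {subset S <= T'} -> ~~ conn s t ((T :\ e) :|: [set:: S]) (s e) (t e).
  apply: contra (no_path (enum T') _) => [C | x]; last by rewrite mem_enum.
  apply: conn_subset C; apply/subsetP => x; rewrite set_enum !inE.
  by case/andP=> -> /orP [] ->; rewrite ?orbT.
elim: S => [_ | f S IH sub]; first by rewrite set_nil setU0; apply: T_tree.2.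
have fT' : f \in T' by apply: sub; apply: mem_head.
set F := _ :|: _; apply/negP => C.
have fF : f \in F by rewrite /F set_cons !inE eqxx orbT.
have sub_S : F :\ f \subset (T :\ e) :|: [set:: S].
  apply/subsetP => x; rewrite /F set_cons !inE.
  by case/andP=> /negbTE xf; rewrite xf /= => /orP [-> | ->]; rewrite ?orbT.
have sub_G : F :\ f \subset T :|: (T' :\ f).
  apply/subsetP => x; rewrite /F set_cons !inE.
  case/andP=> xf; rewrite (negbTE xf) /= => /orP [/andP [_ ->] // | xS].
  by rewrite sub ?orbT // inE xS orbT.
have eG : e \in T :|: (T' :\ f) by rewrite inE eT.
have no_cycle : ~~ conn s t (T :|: (T' :\ f)) (s f) (t f).
  by apply: contra (T'_tree.2 f fT'); apply: conn_contr.
case: (conn_setD1 fF C) => [H | [H1 H2] | [H1 H2]].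
- have sub_S' : {subset S <= T'} by move=> x xS; apply: sub; rewrite inE xS orbT.
  by move: (IH sub_S'); rewrite (conn_subset sub_S H).
- apply: (negP no_cycle); move: H1 H2; rewrite conn_sym.
  move=> /(conn_subset sub_G) H1 /(conn_subset sub_G) H2.
  by apply: conn_trans H1 _; apply: conn_trans (conn_edge _ _ eG) _; rewrite conn_sym.
- apply: (negP no_cycle); move: H1 H2 => /(conn_subset sub_G) H1 /(conn_subset sub_G) H2.
  by apply: conn_trans H2 _; apply: conn_trans _ H1; rewrite conn_sym; apply: conn_edge.
Qed.

Lemma tree_union_contr : is_tree s t (T :|: T') r.
Proof.
split; first exact: union_spans.
by move=> e /setUP [eT | eT']; [apply: union_bridge | apply: union_bridge_contr].
Qed.

End Contraction.

Lemma proc2_spec (V E : finType) (s t : E -> V) (R : realType) (l : E -> R) (r : V)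
    (alpha beta : R) (C : nat -> {set V}) (Ls : seq nat) (Tcur Tres : {set E}) :
  is_tree s t Tcur r -> proc2 s t l r alpha beta C Tcur Ls Tres ->
  [/\ is_tree s t Tres r, verts s t Tcur r \subset verts s t Tres r &
      forall i, i \in Ls -> C i \subset verts s t Tres r].
Proof.
elim: Ls Tcur => [|i Ls IH] Tcur /= Tcur_tree; first by move=> ->; split.
case=> T' [[[_ [T'_tree spanT'] _ _] /(IH _ (tree_union_contr Tcur_tree T'_tree))]].
have sub_union := verts_subset s t r (subsetUl Tcur T').
move=> [Tres_tree sub_res cover]; split=> //; first exact: subset_trans sub_union sub_res.
move=> j /predU1P [-> | /cover //].
exact: subset_trans (subset_verts_spanning_contr spanT') sub_res.
Qed.

Local Open Scope ring_scope.

Section Costs.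
Variables (V E : finType) (s t : E -> V) (R : realType) (l : E -> R).
Variables (r : V) (Dset : {set V}) (d : V -> nat).
Hypothesis l_ge0 : forall e, 0 <= l e.
Local Notation flow := (flow s t r Dset d).
Local Notation cost := (cost s t l r Dset d).
Local Notation Bcost := (Bcost s t l r Dset d).
Local Notation Rcost := (Rcost s t l r Dset d).

Lemma Bcost_ge0 T M : 0 <= Bcost T M.
Proof. by apply: sumr_ge0 => e _; apply: l_ge0. Qed.

Lemma Bcost_le_cost T M : 0 <= M -> M * Bcost T M <= cost M T.
Proof.
move=> M0; rewrite /Defs.cost /Defs.Bcost mulr_sumr.
rewrite [X in _ <= X](bigID (fun e => M <= (flow T e)%:R)) /=.
rewrite -[X in X <= _]addr0; apply: lerD.
  by apply: ler_sum => e /andP [_ Mx]; rewrite /Acost min_r // mulrC.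
by apply: sumr_ge0 => e _; apply: mulr_ge0 => //; rewrite /Acost le_min ler0n.
Qed.

Lemma cost_le_Bcost_Rcost T M M' :
  M <= M' -> cost M T <= M * Bcost T M' + Rcost T M'.
Proof.
move=> MM'; rewrite /Defs.cost /Defs.Bcost /Defs.Rcost mulr_sumr.
rewrite (bigID (fun e => M' <= (flow T e)%:R)) /=.
apply: lerD.
  apply: ler_sum => e _; rewrite mulrC; apply: ler_wpM2r => //.
  by rewrite /Acost ge_min lexx orbT.
under eq_bigl do rewrite -ltNge.
apply: ler_sum => e /andP [_ xM']; apply: ler_wpM2l => //.
by rewrite /Acost le_min !ge_min lexx MM' orbT.
Qed.

Lemma Rcost1 T : Rcost T 1 = 0.
Proof.
rewrite /Defs.Rcost big1 // => e /andP [_]; rewrite ltrn1 ltnS leqn0 => /eqP ->.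
by rewrite /Acost min_l // mulr0.
Qed.

Lemma demand_subset_core1 T : routing_tree s t r Dset T ->
  (forall v, v \in Dset -> (0 < d v)%N) -> Dset \subset core s t r Dset d T (1 : R).
Proof.
move=> [[T_spans T_acyclic] sDT] d_gt0; apply/subsetP => v vD.
have [-> | vr] := eqVneq v r; first exact: setU11.
have [e eT /andP [ev sep]] :=
  exists_incident_bridge T_acyclic (T_spans v (subsetP sDT v vD)) vr.
rewrite !inE; apply/orP; right; apply/existsP; exists e; rewrite eT ev andbT ler1n.
by rewrite /flow (bigD1 v) /= ?vD ?sep //; apply: leq_trans (d_gt0 v vD) (leq_addr _ _).
Qed.

End Costs.

(* [LB T0] and [Lset T0] (steps (5) and (6)) are, by conversion, [records] of
   the buy and rent costs. *)
Section Records.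
Variables (R : realFieldType) (f : nat -> R) (g : R).

Definition record_step (st : seq nat * option R) (i : nat) :=
  if (if st.2 is Some b then f i < b / g else true)
  then (rcons st.1 i, Some (f i)) else st.

Definition records (u : seq nat) : seq nat := (foldl record_step ([::], None) u).1.

Lemma records_iota0 K : 1 <= g -> (forall i, 0 <= f i) ->
  exists2 u, records (iota 0 K.+1) = 0%N :: u &
    forall j, j \in u -> (0 < j <= K)%N /\ f j < f j.-1.
Proof.
move=> g1 f_ge0; have g0 : 0 < g by apply: lt_le_trans g1.
have le_div i : f i / g <= f i by rewrite ler_pdivrMr // ler_peMr.
suff inv n : exists u b,
    [/\ foldl record_step ([:: 0%N], Some (f 0%N)) (iota 1 n) = (0%N :: u, Some b),
        b / g <= f n & forall j, j \in u -> (0 < j <= n)%N /\ f j < f j.-1].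
  by have [u [b [run _ drops]]] := inv K; exists u; rewrite // /records /= run.
elim: n => [|n [u [b [run bn drops]]]]; first by exists [::], (f 0%N).
have -> : iota 1 n.+1 = rcons (iota 1 n) n.+1.
  by rewrite -cats1 -[n.+1]addn1 iotaD /= add1n addn1.
rewrite foldl_rcons run /record_step /=.
have drops_n j : j \in u -> (0 < j <= n.+1)%N /\ f j < f j.-1.
  by move=> /drops [/andP [-> jn] fj]; rewrite (leq_trans jn).
case: ifP => [fn | fn]; last by exists u, b; rewrite leNgt fn.
exists (rcons u n.+1), (f n.+1); split => // j; rewrite mem_rcons inE.
by case/predU1P => [-> | /drops_n //]; split=> //=; apply: lt_le_trans fn bn.
Qed.

Lemma mem_records_rcons u x : 0 < g -> f x = 0 -> {in u, forall j, 0 < f j} ->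
  x \in records (rcons u x).
Proof.
move=> g0 fx0 f_gt0; rewrite /records foldl_rcons.
have pos_record (st : seq nat * option R) :
    (if st.2 is Some b then 0 < b else true) ->
    if (foldl record_step st u).2 is Some b then 0 < b else true.
  elim: u st f_gt0 => [|j u IH] st // f_gt0 st_pos /=; apply: IH.
    by move=> i iu; apply: f_gt0; rewrite inE iu orbT.
  by rewrite /record_step; case: ifP => //= _; apply: f_gt0; apply: mem_head.
move: (pos_record ([::], None) isT); case: foldl => u' [b|] /= b0;
  by rewrite /record_step /= ?fx0 ?divr_gt0 // mem_rcons mem_head.
Qed.

End Records.

Lemma Mi_gt0 (R : realType) (eps : R) i : 0 < eps -> 0 < Mi eps i.
Proof. by move=> eps0; rewrite exprn_gt0 // ltr_pwDr. Qed.

Section Procedure1.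
Variables (V E : finType) (s t : E -> V) (R : realType) (l : E -> R).
Variables (r : V) (Dset : {set V}) (d : V -> nat) (eps : R) (T0 : nat -> {set E}).
Hypothesis l_ge0 : forall e, 0 <= l e.
Local Notation K := (Kof Dset d eps).
Local Notation Tf := (Tfin s t l r Dset d eps T0).
Local Notation cost := (cost s t l r Dset d).
Local Notation Bcost := (Bcost s t l r Dset d).
Local Notation Rcost := (Rcost s t l r Dset d).

Lemma Tfin_inv (P : {set E} -> Prop) :
  (forall j, (j <= K)%N -> P (T0 j)) -> forall i, P (Tf i).
Proof.
move=> P_T0 i; have P_step2 j : (j <= K)%N -> P (step2 s t l r Dset d eps T0 j).
  elim: j => [|j IH] jK /=; first exact: P_T0.
  by case: ifP => _; [apply/IH/ltnW | apply: P_T0].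
rewrite /Tfin; elim: (K - i)%N => [|n IH] /=; first exact: P_step2.
by case: ifP => _ //; apply/P_step2/leq_subr.
Qed.

Lemma cost_Tfin_le_succ i :
  (i < K)%N -> cost (Mi eps i) (Tf i) <= cost (Mi eps i) (Tf i.+1).
Proof.
move=> iK; rewrite /Tfin (_ : K - i = (K - i.+1).+1)%N /=; last by lia.
by rewrite (_ : K - (K - i.+1).+1 = i)%N; [case: ltP => // /ltW | lia].
Qed.

Lemma Rcost_Tfin_gt0 i : 0 < eps -> (i < K)%N ->
  Bcost (Tf i.+1) (Mi eps i.+1) < Bcost (Tf i) (Mi eps i) ->
  0 < Rcost (Tf i.+1) (Mi eps i.+1).
Proof.
move=> eps0 iK Bdrop; have M0 := Mi_gt0 i eps0.
have MM : Mi eps i <= Mi eps i.+1.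
  by rewrite /Mi exprS; apply: ler_peMl; [apply: ltW | rewrite lerDl ltW].
set M := Mi eps i in M0 MM Bdrop *.
have buy : M * Bcost (Tf i) M <= cost M (Tf i) by apply: Bcost_le_cost => //; apply: ltW.
have rent : cost M (Tf i.+1) <=
    M * Bcost (Tf i.+1) (Mi eps i.+1) + Rcost (Tf i.+1) (Mi eps i.+1).
  exact: cost_le_Bcost_Rcost.
have := cost_Tfin_le_succ iK; rewrite -(ltr_pM2l M0) in Bdrop; lra.
Qed.

Lemma mem0_Lset (gamma delta : R) : 0 < eps -> 1 <= gamma -> 0 < delta ->
  (0 \in Lset s t l r Dset d eps gamma delta T0)%N.
Proof.
move=> eps0 g1 delta0.
have B_ge0 i : 0 <= Bcost (Tf i) (Mi eps i) by apply: Bcost_ge0.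
have [u LB_eq drops] := records_iota0 K g1 B_ge0.
rewrite /Lset (_ : LB _ _ _ _ _ _ _ _ _ = 0%N :: u) // rev_cons.
apply: (mem_records_rcons (f := fun i => Rcost (Tf i) (Mi eps i))) => //.
  by rewrite /Mi expr0 Rcost1.
move=> j; rewrite mem_rev => /drops [/andP []].
by case: j => // i _ iK; apply: Rcost_Tfin_gt0.
Qed.

End Procedure1.

Unset Implicit Arguments. Set Strict Implicit.

Theorem lemma7 (R : realType) (V E : finType) (src tgt : E -> V) (l : E -> R)
  (r : V) (Dset : {set V}) (d : V -> nat)
  (eps alpha beta gamma delta lambda : R)
  (T0 : nat -> {set E}) (T : {set E}) :
  (forall e, 0 <= l e) ->
  (forall v, v \in Dset -> (0 < d v)%N) ->
  0 < eps -> 1 < alpha -> (alpha + 1) / (alpha - 1) <= beta ->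
  1 < gamma -> 1 < delta -> 1 <= lambda ->
  (* step (1): T0 i is the output of a deterministic lambda-approximation
     algorithm for SSRoB with cost function A_i *)
  (forall i, (i <= Kof Dset d eps)%N ->
     routing_tree src tgt r Dset (T0 i) /\
     (forall T', routing_tree src tgt r Dset T' ->
        cost src tgt l r Dset d (Mi eps i) (T0 i)
          <= lambda * cost src tgt l r Dset d (Mi eps i) T')) ->
  proc2_result src tgt l r Dset d eps gamma delta alpha beta T0 T ->
  is_tree src tgt T r /\ Dset \subset verts src tgt T r.
Proof.
move=> l_ge0 d_gt0 eps0 _ _ gamma1 delta1 _ T0_spec run.
have [T_tree _ cover] := proc2_spec (is_tree_set0 src tgt r) run.
split=> //; apply: subset_trans (cover 0%N _); last first.
  by rewrite mem_sort mem0_Lset // ?ltW // (lt_trans ltr01).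
have Tfin0_routing := Tfin_inv src tgt l r (P := routing_tree src tgt r Dset)
  (fun j jK => (T0_spec j jK).1) 0.
by rewrite /Ci /Mi expr0; apply: demand_subset_core1.
Qed.
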